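(* Let $v_0=\epsilon$ (the empty word) and for $i>0$ let $v_i=\bigl(v_{i-1}0v_{i-1}1v_{i-1}1v_{i-1}0v_{i-1}2v_{i-1}2\bigr)^{(+)}$ over the alphabet $\{0,1,2\}$. Then for every $i$, the palindrome $v_i$ is rich.
   Context: For a finite word $w$, $w^{(+)}$ denotes the shortest palindrome having $w$ as a prefix. A finite word $w$ is rich if it contains exactly $|w|+1$ distinct palindromic factors (counting the empty word). *)

From mathcomp Require Import all_boot.
Set Implicit Arguments. Unset Strict Implicit. Unset Printing Implicit Defensive.

Definition letter := 'I_3.
Definition word := seq letter.
Definition l0 : letter := @Ordinal 3 0 isT.
Definition l1 : letter := @Ordinal 3 1 isT.
Definition l2 : letter := @Ordinal 3 2 isT.

Definition palindrome (w : word) : bool := rev w == w.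

(* p is the shortest palindrome having w as a prefix, i.e. p = w^(+). *)
Definition is_pal_closure (w p : word) : Prop :=
  [/\ palindrome p, prefix w p &
      forall q : word, palindrome q -> prefix w q -> size p <= size q].

Definition factors (w : word) : seq word :=
  undup [seq take j (drop i w) | i <- iota 0 (size w).+1, j <- iota 0 (size w).+1].

Definition pal_factors (w : word) : seq word := [seq u <- factors w | palindrome u].

Definition rich (w : word) : bool := size (pal_factors w) == (size w).+1.

Definition step_word (u : word) : word :=
  u ++ l0 :: u ++ l1 :: u ++ l1 :: u ++ l0 :: u ++ l2 :: u ++ [:: l2].

From mathcomp Require Import all_boot.
From Stdlib Require Import Lia.
From mathcomp Require Import zify.
Set Implicit Arguments. Unset Strict Implicit. Unset Printing Implicit Defensive.

(* Let x = 0110220110 = v_1 and phi(u) = x u_1 x u_2 ... x u_n x.  The longest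
   palindromic suffix of v 0 v 1 v 1 v 0 v 2 v 2 is 2 v 2 when v = phi^i(eps):
   a longer one for phi(v) would have to align the factor 22 at its mirrored
   start with the 22 of a copy of x, and would then be the phi-image of a
   longer one for v.  Hence v_(i+1) = v_i 0 v_i 1 v_i 1 v_i 0 v_i 2 v_i 2 v_i 0
   v_i 1 v_i 1 v_i 0 v_i, a construction that commutes with phi, so that
   v_i = phi^i(eps).  A word w has at most |w| + 1 palindromic factors, since
   appending a letter creates at most one new palindrome.  If u is rich, each
   of its |u| nonempty palindromes p yields the 11 palindromic factors of
   phi(u) obtained by cutting j letters off both ends of phi(p), 0 <= j <= 10;
   with 11 short palindromes these reach the bound |phi(u)| + 1. *)

(* [lia] treats [@size letter w] and [@size (Equality.sort _) w] as distinct
   atoms; unify them first. *)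
Ltac size_lia := repeat match goal with
  | H : context [@size ?T ?s] |- _ => progress change (@size T s) with (@size letter s) in H
  | |- context [@size ?T ?s] => progress change (@size T s) with (@size letter s)
  end; lia.

Section Suffix.

Variable T : eqType.
Implicit Types p q r : seq T.

Lemma size_suffix p r : suffix p r -> size p <= size r.
Proof. by move=> /suffixP[r' ->]; rewrite size_cat leq_addl. Qed.

Lemma suffix_shorter p q r :
  suffix p r -> suffix q r -> size p <= size q -> suffix p q.
Proof.
move=> Spr Sqr le_pq; have le_qr := size_suffix Sqr.
move: Spr Sqr; rewrite !suffixE => /eqP <- /eqP <-.
by rewrite drop_drop !size_drop; apply/eqP; congr drop; lia.
Qed.

End Suffix.

Section Trim.

Variable T : Type.
Implicit Types s : seq T.

Definition trim j s := drop j (take (size s - j) s).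

Lemma size_trim j s : size (trim j s) = size s - j - j.
Proof. by rewrite size_drop size_takel ?leq_subr. Qed.

Lemma rev_trim j s : rev (trim j s) = trim j (rev s).
Proof.
have [le_js|lt_sj] := leqP (j + j) (size s); last first.
  have nil_trim t : size t < j + j -> trim j t = [::].
    by move=> lt_tj; apply: size0nil; rewrite size_trim; lia.
  by rewrite !nil_trim ?size_rev.
rewrite /trim size_rev.
have -> : rev (drop j (take (size s - j) s)) =
          take (size s - j - j) (rev (take (size s - j) s)).
  by rewrite take_rev size_takel ?leq_subr //; congr (rev (drop _ _)); lia.
by rewrite -drop_rev take_drop; congr (drop _ (take _ _)); lia.
Qed.

Lemma trim_split j s :
  j + j <= size s -> take j s ++ trim j s ++ drop (size s - j) s = s.
Proof.
move=> le_js; rewrite -{1}(@take_takel _ j (size s - j) s); last by lia.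
by rewrite catA cat_take_drop cat_take_drop.
Qed.

End Trim.

Lemma infix_trim (T : eqType) j (s : seq T) : infix (trim j s) s.
Proof. exact: infix_trans (suffixW (suffix_drop _ _)) (prefixW (prefix_take _ _)). Qed.

Lemma mem_factors u w : (u \in factors w) = infix u w.
Proof.
rewrite /factors mem_undup; apply/allpairsP/infixP => [[[i j] /= [_ _ ->]]|].
  by exists (take i w), (drop j (drop i w)); rewrite !cat_take_drop.
move=> [s [s' ->]]; exists (size s, size u); rewrite !mem_iota !size_cat.
rewrite drop_size_cat // take_size_cat //.
by split=> //=; rewrite add0n ltnS ?leq_addr // addnCA leq_addr.
Qed.

Lemma mem_pal_factors u w : (u \in pal_factors w) = palindrome u && infix u w.
Proof. by rewrite mem_filter mem_factors. Qed.

Lemma uniq_pal_factors w : uniq (pal_factors w).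
Proof. by rewrite filter_uniq ?undup_uniq. Qed.

Lemma palindrome_trim j s : palindrome s -> palindrome (trim j s).
Proof. by move=> /eqP Ps; rewrite /palindrome rev_trim Ps. Qed.

(* A shorter new palindrome p is a proper suffix, hence a proper prefix, of the
   palindrome q, so it already occurs in w. *)
Lemma new_pal_factor_unique (w p q : word) a :
  palindrome p -> palindrome q -> infix p (rcons w a) -> infix q (rcons w a) ->
  ~~ infix p w -> ~~ infix q w -> p = q.
Proof.
wlog le_pq : p q / size p <= size q.
  move=> sym Pp Pq Ip Iq Np Nq; have [le|/ltnW le] := leqP (size p) (size q).
    exact: sym.
  by apply/esym/sym.
move=> /eqP Pp /eqP Pq; rewrite !infix_rconsl => /orP[Sp|->] // /orP[Sq|->] // Np _.
have /suffixP[t Eq] := suffix_shorter Sp Sq le_pq.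
case/lastP: t Eq => [|t b Eq]; first by rewrite cat0s.
have {}Eq : q = p ++ rev (rcons t b) by rewrite -Pq Eq rev_cat Pp.
move: Sq; rewrite Eq rev_rcons lastI -rcons_cat suffix_rcons => /andP[_ /suffixW].
by move=> /(infix_trans (prefix_infix _ _)) pw; rewrite pw in Np.
Qed.

Lemma size_pal_factors_rcons (w : word) a :
  size (pal_factors (rcons w a)) <= (size (pal_factors w)).+1.
Proof.
set P := pal_factors (rcons w a); set Q := pal_factors w.
rewrite -(count_predC (mem Q) P) -!size_filter -[(size Q).+1]addn1 leq_add //.
  apply: uniq_leq_size => [|x]; first by rewrite filter_uniq ?uniq_pal_factors.
  by rewrite mem_filter => /andP[].
set N := [seq x <- P | x \notin Q].
have eqN : {in N &, forall p q, p = q}.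
  move=> p q; rewrite !mem_filter !mem_factors => /and3P[pQ Pp Ip].
  move=> /and3P[qQ Pq Iq]; apply: (new_pal_factor_unique Pp Pq Ip Iq).
    by apply: contra pQ => ->; rewrite Pp.
  by apply: contra qQ => ->; rewrite Pq.
case EN: N => [//|p s]; rewrite -EN.
apply: (@uniq_leq_size _ _ [:: p]) => [|q qN].
  by rewrite filter_uniq ?uniq_pal_factors.
by rewrite inE (eqN q p) // EN mem_head.
Qed.

Lemma size_pal_factors_le (w : word) : size (pal_factors w) <= (size w).+1.
Proof.
elim/last_ind: w => // w a IH.
by rewrite size_rcons (leq_trans (size_pal_factors_rcons w a)).
Qed.

Lemma rich_of_pal_list (w : word) (L : seq word) :
  uniq L -> {subset L <= pal_factors w} -> (size w).+1 <= size L -> rich w.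
Proof.
move=> uL sLP le_wL; rewrite /rich eqn_leq size_pal_factors_le.
exact: leq_trans le_wL (uniq_leq_size uL sLP).
Qed.

Definition seed : word := [:: l0; l1; l1; l0; l2; l2; l0; l1; l1; l0].

Definition expand (u : word) : word := seed ++ flatten [seq a :: seed | a <- u].
Arguments expand : simpl never.

Lemma expand0 : expand [::] = seed.
Proof. by rewrite /expand cats0. Qed.

Lemma expand_cons a u : expand (a :: u) = seed ++ a :: expand u.
Proof. by rewrite /expand. Qed.

Lemma expand_cat u a w : expand (u ++ a :: w) = expand u ++ a :: expand w.
Proof. by rewrite /expand map_cat flatten_cat -!catA. Qed.

Lemma expand_rcons u a : expand (rcons u a) = expand u ++ a :: seed.
Proof. by rewrite -cats1 expand_cat expand0. Qed.

Lemma size_expand u : size (expand u) = 11 * size u + 10.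
Proof.
elim: u => [|a u IH]; rewrite ?expand0 // expand_cons size_cat.
by rewrite (_ : size (a :: _) = (size (expand u)).+1) // IH /=; lia.
Qed.

Lemma rev_expand u : rev (expand u) = expand (rev u).
Proof.
elim: u => [|a u IH]; first by rewrite expand0.
rewrite expand_cons rev_cat rev_cons IH (_ : rev seed = seed) //.
by rewrite cat_rcons -expand_rcons rev_cons.
Qed.

Lemma expand_inj : injective expand.
Proof.
elim=> [|a u IH] [|b w] // E;
  try by have := congr1 size E; rewrite !size_expand /=; lia.
move: E; rewrite !expand_cons => /(congr1 (drop (size seed))).
by rewrite !drop_size_cat // => -[-> E]; rewrite (IH w) // /expand E.
Qed.

Lemma palindrome_expand p : palindrome (expand p) = palindrome p.
Proof. by rewrite /palindrome rev_expand (inj_eq expand_inj). Qed.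

Lemma prefix_expand p t : prefix (expand p) (expand (p ++ t)).
Proof. by case: t => [|c t]; rewrite ?cats0 ?expand_cat ?prefix_refl ?prefix_prefix. Qed.

Lemma suffix_expand s p : suffix (expand p) (expand (s ++ p)).
Proof.
case/lastP: s => [|s c]; first exact: suffix_refl.
by rewrite cat_rcons expand_cat -cat_rcons suffix_suffix.
Qed.

Lemma infix_expand p u : infix p u -> infix (expand p) (expand u).
Proof.
move=> /infixP[s [s' ->]].
exact: infix_trans (prefixW (prefix_expand p s')) (suffixW (suffix_expand s _)).
Qed.

Lemma drop_expand_cons a u : drop 11 (expand (a :: u)) = expand u.
Proof. by rewrite expand_cons -cat_rcons drop_size_cat. Qed.

Lemma nth_expand_seed u q r :
  q <= size u -> r < 10 -> nth l0 (expand u) (11 * q + r) = nth l0 seed r.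
Proof.
elim: u q => [|a u IH] [|q] le_qu lt_r //.
  by rewrite muln0 add0n /expand nth_cat lt_r.
by rewrite mulnS -addnA -nth_drop drop_expand_cons IH.
Qed.

Lemma drop_expand u k : expand (drop k u) = seed ++ drop (11 * k + 10) (expand u).
Proof.
elim: u k => [|a u IH] [|k].
- by rewrite expand0 drop_oversize ?cats0.
- by rewrite expand0 drop_oversize ?cats0 // leq_addl.
- by rewrite /expand drop_size_cat.
rewrite [drop k.+1 _]/= IH mulnS -addnA [11 + _]addnC.
by rewrite -[drop (_ + 11) _]drop_drop drop_expand_cons.
Qed.

Lemma expand_l2l2_pos u m :
  nth l0 (expand u) m = l2 -> nth l0 (expand u) m.+1 = l2 -> m %% 11 = 4.
Proof.
move=> Em Em1; have lt_mu : m.+1 < 11 * size u + 10.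
  by rewrite -size_expand ltnNge; apply: contraPN Em1 => /(nth_default l0) ->.
move: (divn_eq m 11) (ltn_pmod m (isT : 0 < 11)) Em Em1 lt_mu.
move: (m %/ 11) (m %% 11) => q r -> lt_r; rewrite mulnC => + + lt_qu.
have le_qu : q <= size u by lia.
have [lt_r9|] := ltnP r 9.
  rewrite -addnS !nth_expand_seed //; last by lia.
  by case: r lt_r9 {lt_r lt_qu} => [|[|[|[|[|[|[|[|[|]]]]]]]]].
move=> le9r; have [->|Er] : r = 9 \/ r = 10 by lia.
  by rewrite nth_expand_seed.
rewrite Er in lt_qu * => _; rewrite (_ : (11 * q + 10).+1 = 11 * q.+1 + 0).
  by rewrite nth_expand_seed //; lia.
by lia.
Qed.

(* The last seven letters 2 2 0 1 1 0 a of s are mirrored at its start, so s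
   has a factor 22 at offset 5; as 22 only sits at offsets 4 mod 11 in an
   expanded word, s starts right after a seed. *)
Lemma expand_pal_suffix u s :
  suffix (s ++ seed) (expand u) -> palindrome s -> 7 <= size s ->
  exists2 z, suffix z u & seed ++ s ++ seed = expand z.
Proof.
case/lastP: u => [|u a].
  move=> /size_suffix; rewrite expand0 size_cat -[X in _ <= X]add0n leq_add2r.
  by rewrite leqn0 => /eqP->.
move=> Ss /eqP Ps le7s; have := Ss.
rewrite expand_rcons -cat_rcons suffix_catl // eqxx andTb => Ss'.
have Sseed : suffix seed (expand u) by rewrite -expand0 -[u]cats0 suffix_expand.
have St : suffix [:: l2; l2; l0; l1; l1; l0; a] s.
  apply: (suffix_shorter _ Ss') => //.
  by rewrite -[_ :: _]/(rcons (drop 4 seed) a) suffix_rcons eqxx (suffix_trans _ Sseed).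
have {St} [t Es] : exists t, s = [:: a; l0; l1; l1; l0; l2; l2] ++ t.
  by case/suffixP: St => t Es; exists (rev t); rewrite -Ps Es rev_cat.
set d := size (expand (rcons u a)) - size (s ++ seed).
have Ed : drop d (expand (rcons u a)) = s ++ seed by apply/eqP; rewrite -suffixE.
have /expand_l2l2_pos d_mod : nth l0 (expand (rcons u a)) (d + 5) = l2.
  by rewrite -nth_drop Ed Es.
have {}d_mod : d = 11 * (d %/ 11) + 10.
  by move: d_mod; rewrite -addnS -nth_drop Ed Es => /(_ erefl); lia.
exists (drop (d %/ 11) (rcons u a)); first exact: suffix_drop.
by rewrite drop_expand -d_mod Ed.
Qed.

Lemma palindrome_cat3 (x y r : word) :
  size x = size r -> palindrome (x ++ y ++ r) -> x = rev r /\ palindrome y.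
Proof.
move=> Exr /eqP; rewrite !rev_cat -catA => /eqP.
rewrite eqseq_cat ?size_rev // => /andP[/eqP<-]; rewrite revK.
by rewrite eqseq_cat ?size_rev // => /andP[].
Qed.

Lemma pal_closure_cat (t s q : word) :
  palindrome s ->
  (forall s', suffix s' (t ++ s) -> palindrome s' -> size s' <= size s) ->
  is_pal_closure (t ++ s) q -> q = t ++ s ++ rev t.
Proof.
move=> /eqP Ps longest [Pq /prefixP[r Eq] minq]; subst q.
have Pts : palindrome (t ++ s ++ rev t) by rewrite /palindrome !rev_cat revK Ps catA.
have le_rt : size r <= size t.
  have := minq _ Pts; rewrite catA prefix_prefix !size_cat size_rev => /(_ isT).
  by rewrite leq_add2l.
have := Pq; rewrite -(cat_take_drop (size r) (t ++ s)) -catA.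
case/palindrome_cat3 => [|Er Py]; first by rewrite size_takel // size_cat; lia.
have := longest _ (suffix_drop _ _) Py; rewrite size_drop size_cat => le_s.
have Ert : size r = size t by size_lia.
by rewrite catA cat_take_drop -(revK r) -Er Ert take_size_cat // catA.
Qed.

Definition step_prefix (v : word) : word := v ++ l0 :: v ++ l1 :: v ++ l1 :: v ++ l0 :: v.

Definition pal_step (v : word) : word := step_word v ++ step_prefix v.

Lemma step_wordE v : step_word v = step_prefix v ++ l2 :: v ++ [:: l2].
Proof. by rewrite /step_word /step_prefix; repeat rewrite -catA /=. Qed.

Lemma rev_step_prefix v : palindrome v -> rev (step_prefix v) = step_prefix v.
Proof.
move=> /eqP Pv; rewrite /step_prefix !(rev_cat, rev_cons) Pv -!cats1.
by repeat rewrite -catA /=.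
Qed.

Definition short_step_pal_suffixes (v : word) : Prop :=
  forall s, suffix s (step_word v) -> palindrome s -> size s <= size v + 2.

Lemma pal_closure_step v q :
  palindrome v -> short_step_pal_suffixes v ->
  is_pal_closure (step_word v) q -> q = pal_step v.
Proof.
move=> Pv longest; rewrite step_wordE => /pal_closure_cat ->.
- by rewrite rev_step_prefix // /pal_step step_wordE -catA.
- by rewrite /palindrome rev_cons rev_cat (eqP Pv) -cats1 -catA.
rewrite -step_wordE (_ : size (l2 :: _) = size v + 2) //.
by rewrite /= size_cat addn1 addn2.
Qed.

Lemma expand_step_word v : expand (step_word v) = step_word (expand v) ++ seed.
Proof. by rewrite /step_word !expand_cat expand0; repeat rewrite -catA /=. Qed.

Lemma expand_pal_step v : expand (pal_step v) = pal_step (expand v).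
Proof.
rewrite /pal_step /step_word /step_prefix; repeat rewrite -catA /=.
by rewrite !expand_cat.
Qed.

Lemma short_step_pal_suffixes0 : short_step_pal_suffixes [::].
Proof.
move=> s; rewrite suffixE => /eqP <-; move: (size _ - size s) => j.
by case: j => [|[|[|[|j]]]] // _; rewrite size_drop /=; lia.
Qed.

Lemma short_step_pal_suffixes_expand v :
  short_step_pal_suffixes v -> short_step_pal_suffixes (expand v).
Proof.
move=> short s Ss Ps; rewrite leqNgt; apply/negP => long_s.
have Sseed : suffix (s ++ seed) (expand (step_word v)).
  by rewrite expand_step_word suffix_catl // eqxx.
have [|z Sz Ez] := expand_pal_suffix Sseed Ps.
  by move: long_s; rewrite size_expand; size_lia.
have Pz : palindrome z.
  by rewrite -palindrome_expand -Ez /palindrome !rev_cat (eqP Ps) -catA.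
have := short z Sz Pz; have := congr1 size Ez.
by rewrite size_expand !size_cat /=; move: long_s; rewrite size_expand; size_lia.
Qed.

Lemma short_step_pal_suffixes_iter i : short_step_pal_suffixes (iter i expand [::]).
Proof.
elim: i => [|i IH]; first exact: short_step_pal_suffixes0.
by rewrite iterS; apply: short_step_pal_suffixes_expand.
Qed.

Lemma palindrome_iter_expand i : palindrome (iter i expand [::]).
Proof. by elim: i => // i IH; rewrite iterS palindrome_expand. Qed.

Lemma pal_step_iter_expand i : pal_step (iter i expand [::]) = iter i.+1 expand [::].
Proof.
elim: i => [|i IH]; first by rewrite /= expand0.
by rewrite [in LHS]iterS -expand_pal_step IH.
Qed.

Lemma pal_closure_iter (v : nat -> word) :
  v 0 = [::] -> (forall i, is_pal_closure (step_word (v i)) (v i.+1)) ->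
  forall i, v i = iter i expand [::].
Proof.
move=> v0 vS; elim=> // i IH.
rewrite -pal_step_iter_expand -IH (pal_closure_step _ _ (vS i)) // IH.
  exact: palindrome_iter_expand.
exact: short_step_pal_suffixes_iter.
Qed.

Lemma take_expand u j : j <= 10 -> take j (expand u) = take j seed.
Proof.
move=> le_j10; rewrite /expand take_cat; case: ltnP => // le10j.
have -> : j = size seed by apply/eqP; rewrite eqn_leq le10j le_j10.
by rewrite subnn take0 cats0 take_size.
Qed.

Lemma drop_expand_seed u j :
  j <= 10 -> drop (size (expand u) - j) (expand u) = drop (10 - j) seed.
Proof.
move=> le_j10; apply: (can_inj revK).
by rewrite -take_rev rev_expand take_expand // -[10]/(size seed) -take_rev.
Qed.

Lemma trim_expand_inj j p p' :
  j <= 10 -> j + j <= size (expand p) -> size p = size p' ->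
  trim j (expand p) = trim j (expand p') -> p = p'.
Proof.
move=> le_j10 le_jp Epp' Etrim; apply: expand_inj.
have le_jp' : j + j <= size (expand p') by rewrite !size_expand -Epp' in le_jp *.
by rewrite -(trim_split le_jp) -(trim_split le_jp') !take_expand // !drop_expand_seed // Etrim.
Qed.

Definition trimmed_images (u : word) : seq word :=
  [seq trim j (expand p) | p <- [seq p <- pal_factors u | p != [::]], j <- iota 0 11].

Lemma uniq_trimmed_images u : uniq (trimmed_images u).
Proof.
apply: allpairs_uniq => [||[p j] [p' j']]; first exact: filter_uniq (uniq_pal_factors u).
  exact: iota_uniq.
move=> /allpairsP[[q k] [+ + [-> ->]]] /allpairsP[[q' k'] [+ + [-> ->]]] /=.
rewrite !mem_filter !mem_iota /= -!size_eq0 => /andP[nq _] lt_k /andP[nq' _] lt_k' Etrim.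
have := congr1 size Etrim; rewrite !size_trim !size_expand => Esize.
have [Ek Eq] : k = k' /\ size q = size q' by size_lia.
by subst k'; rewrite (trim_expand_inj _ _ Eq Etrim) // size_expand; size_lia.
Qed.

Lemma trimmed_images_sub u : {subset trimmed_images u <= pal_factors (expand u)}.
Proof.
move=> _ /allpairsP[[p j] [+ _ ->]] /=; rewrite mem_filter !mem_pal_factors.
move=> /and3P[_ Pp Ip]; rewrite palindrome_trim ?palindrome_expand //=.
exact: infix_trans (infix_trim _ _) (infix_expand Ip).
Qed.

(* The palindromic factors of [expand u] that are not trimmed images: those
   inside a seed, those around a letter [a] of [u] that are not centered on it,
   and each letter that does not occur in [u]. *)
Definition short_pals (u : word) : seq word :=
  [:: [::]; [:: l1; l1]; [:: l2; l2]; [:: l0; l1; l1; l0]; [:: l0; l2; l2; l0];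
      [:: l1; l0; l2; l2; l0; l1]; [:: l1; l1; l0; l2; l2; l0; l1; l1]; seed;
      if l0 \in u then [:: l0; l0] else [:: l0];
      if l1 \in u then [:: l1; l0; l1] else [:: l1];
      if l2 \in u then [:: l2; l0; l1; l1; l0; l2] else [:: l2]].

Lemma size_short_pals u : size (short_pals u) = 11.
Proof. by []. Qed.

Lemma uniq_short_pals u : uniq (short_pals u).
Proof. by rewrite /short_pals; case: ifP; case: ifP; case: ifP. Qed.

Lemma short_pals_sub u : {subset short_pals u <= pal_factors (expand u)}.
Proof.
have: all (fun e => palindrome e && (infix e seed ||
          has (fun a => infix e (expand [:: a]) && (a \in u)) [:: l0; l1; l2]))
        (short_pals u).
  by rewrite /short_pals; case: ifP => u0; case: ifP => u1; case: ifP => u2;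
    rewrite /= ?u0 ?u1 ?u2.
move=> /allP short e /short /andP[Pe]; rewrite mem_pal_factors Pe.
case/orP=> [/infix_trans-> //|/hasP[a _ /andP[Ie au]]]; first exact: prefix_infix.
by apply: infix_trans Ie (infix_expand _); rewrite infix1s.
Qed.

Lemma letterP (a : letter) : [\/ a = l0, a = l1 | a = l2].
Proof.
by case: a => [[|[|[|//]]] Ha]; [constructor 1 | constructor 2 | constructor 3];
  apply: val_inj.
Qed.

Lemma short_pals_short u : all (fun e : word => size e <= 10) (short_pals u).
Proof. by rewrite /short_pals; case: ifP; case: ifP; case: ifP. Qed.

Lemma trimmed_image_notin_short_pals u p j :
  p \in pal_factors u -> p != [::] -> j < 11 -> trim j (expand p) \notin short_pals u.
Proof.
move=> pu; rewrite -size_eq0; case: p pu => [//|b [|c p]] pu _ lt_j.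
  have: b \in u by rewrite -infix1s; move: pu; rewrite mem_pal_factors => /andP[].
  rewrite /short_pals /trim /expand.
  by case: (letterP b) => ->; case: j lt_j => [|[|[|[|[|[|[|[|[|[|[|]]]]]]]]]]] //;
    case: (_ \in u); case: (_ \in u); case: (_ \in u).
apply/negP => /(allP (short_pals_short u)); rewrite size_trim size_expand /=; lia.
Qed.

Lemma size_nonempty_pal_factors u :
  rich u -> size [seq p <- pal_factors u | p != [::]] = size u.
Proof.
move=> /eqP rich_u; apply/eqP; rewrite -(eqn_add2l 1) size_filter.
have nil_u : [::] \in pal_factors u by rewrite mem_pal_factors infix0s.
have one : count_mem [::] (pal_factors u) = 1.
  by rewrite count_uniq_mem ?uniq_pal_factors ?nil_u.
by rewrite -{1}one (count_predC (pred1 [::])) rich_u.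
Qed.

Lemma rich_expand u : rich u -> rich (expand u).
Proof.
move=> rich_u; apply: (@rich_of_pal_list _ (trimmed_images u ++ short_pals u)).
- rewrite cat_uniq uniq_trimmed_images uniq_short_pals andbT.
  apply/hasPn => e e_short; apply/negP => /allpairsP[[p j] [+ + Ee]] /=.
  rewrite mem_filter mem_iota => /andP[np pu] /andP[_ lt_j].
  by move: e_short; rewrite Ee (negbTE (trimmed_image_notin_short_pals pu np lt_j)).
- by move=> e; rewrite mem_cat => /orP[/trimmed_images_sub|/short_pals_sub].
rewrite size_cat size_allpairs size_iota size_nonempty_pal_factors // size_expand.
by rewrite size_short_pals mulnC ltn_add2l.
Qed.

Theorem lemma5p7 (v : nat -> word) :
  v 0 = [::] ->
  (forall i, is_pal_closure (step_word (v i)) (v i.+1)) ->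
  forall i, rich (v i).
Proof.
move=> v0 vS i; rewrite (pal_closure_iter v0 vS i).
by elim: i => // i IH; rewrite iterS; apply: rich_expand.
Qed.
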